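(* Let $\mathcal{F}(X)\subseteq\Psi$ with admissible topology $\Delta$, and suppose there is a base $\beta$ for the topology of $X$ with $U^+=\{A\in\Psi:A\subseteq U\}\in\Delta$ for every $U\in\beta$. Then $(X,\mathbb{F})$ is weakly mixing of all orders if and only if $(\Psi,\overline{\mathbb{F}})$ is weakly mixing of all orders.
   Context: $(X,d)$ compact metric, $\mathbb{F}=(f_n)$ continuous self-maps, $\omega_n=f_n\circ\cdots\circ f_1$. Weak mixing of order $k$: for any non-empty open $U_1,\dots,U_k,V_1,\dots,V_k$ there is $n$ with $\omega_n(U_i)\cap V_i\neq\emptyset$ for all $i$. $\mathcal{F}(X)$: non-empty finite subsets; $\Psi\subseteq\mathcal{K}(X)$ invariant under all $\omega_k$; induced system $\overline{\omega}_k(A)=\omega_k(A)$, notions defined analogously on $(\Psi,\Delta)$. Admissible topology: hit-and-miss or hit-and-far-miss type topology with $x\mapsto\{x\}$ continuous, generated by $U^-=\{A:A\cap U\neq\emptyset\}$ and miss sets $(E^c)^+$ or $(E^c)^{++}$ for $E$ in a fixed family of closed sets; induced maps continuous. *)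

From Stdlib Require Import Reals List.
Open Scope R_scope.
Set Implicit Arguments.

Section Defs.
Variable X : Type.
Variable d : X -> X -> R.

Definition is_metric : Prop :=
  (forall x y, 0 <= d x y) /\ (forall x y, d x y = 0 <-> x = y) /\
  (forall x y, d x y = d y x) /\ (forall x y z, d x z <= d x y + d y z).

Definition open (U : X -> Prop) : Prop :=
  forall x, U x -> exists r, 0 < r /\ forall y, d x y < r -> U y.
Definition closed (E : X -> Prop) : Prop := open (fun x => ~ E x).

Definition compact_set (K : X -> Prop) : Prop :=
  forall C : (X -> Prop) -> Prop,
    (forall U, C U -> open U) ->
    (forall x, K x -> exists U, C U /\ U x) ->
    exists l : list (X -> Prop),
      (forall U, In U l -> C U) /\ (forall x, K x -> exists U, In U l /\ U x).
Definition compact_space : Prop := compact_set (fun _ => True).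

Definition continuous (g : X -> X) : Prop :=
  forall x eps, 0 < eps -> exists delta, 0 < delta /\
    forall y, d x y < delta -> d (g x) (g y) < eps.

Definition fin_nonempty (A : X -> Prop) : Prop :=
  exists l : list X, l <> nil /\ forall x, A x <-> In x l.

Definition hit (U : X -> Prop) (A : X -> Prop) : Prop := exists x, A x /\ U x.
Definition miss (U : X -> Prop) (A : X -> Prop) : Prop := forall x, A x -> U x.
Definition farmiss (U : X -> Prop) (A : X -> Prop) : Prop :=
  exists eps, 0 < eps /\ forall a y, A a -> d a y < eps -> U y.

(* subbase of an admissible topology on Psi: hit sets U^- (U open) and miss
   sets (E^c)^+ (far = false) or far-miss sets (E^c)^{++} (far = true),
   E ranging over the fixed family Efam of closed sets. *)
Definition adm_subbase (Psi : (X -> Prop) -> Prop) (Efam : (X -> Prop) -> Prop)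
  (far : bool) (S : (X -> Prop) -> Prop) : Prop :=
  (exists U, open U /\ forall A, S A <-> (Psi A /\ hit U A)) \/
  (exists E, Efam E /\ forall A, S A <->
     (Psi A /\ (if far then farmiss (fun x => ~ E x) A
                       else miss (fun x => ~ E x) A))).

Definition gen_open (Psi : (X -> Prop) -> Prop)
  (Sub : ((X -> Prop) -> Prop) -> Prop) (W : (X -> Prop) -> Prop) : Prop :=
  (forall A, W A -> Psi A) /\
  forall A, W A -> exists l : list ((X -> Prop) -> Prop),
    (forall S, In S l -> Sub S /\ S A) /\
    (forall B, Psi B -> (forall S, In S l -> S B) -> W B).

Definition Delta_open (Psi : (X -> Prop) -> Prop) (Efam : (X -> Prop) -> Prop)
  (far : bool) : ((X -> Prop) -> Prop) -> Prop :=
  gen_open Psi (adm_subbase Psi Efam far).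

End Defs.

(* omega f n = f (n-1) o ... o f 0 ; paper's f_i is f (i-1), omega f 0 = id *)
Fixpoint omega (X : Type) (f : nat -> X -> X) (n : nat) : X -> X :=
  match n with
  | O => fun x => x
  | S m => fun x => f m (omega f m x)
  end.

Definition image (X : Type) (g : X -> X) (A : X -> Prop) : X -> Prop :=
  fun y => exists x, A x /\ y = g x.

Definition weakly_mixing_order (T : Type) (isopen : (T -> Prop) -> Prop)
  (g : nat -> T -> T) (k : nat) : Prop :=
  forall U V : nat -> T -> Prop,
    (forall i, (i < k)%nat ->
       isopen (U i) /\ (exists x, U i x) /\ isopen (V i) /\ (exists y, V i y)) ->
    exists n, (1 <= n)%nat /\
      forall i, (i < k)%nat -> exists x, U i x /\ V i (g n x).

Definition weakly_mixing_all (T : Type) (isopen : (T -> Prop) -> Prop)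
  (g : nat -> T -> T) : Prop :=
  forall k, (1 <= k)%nat -> weakly_mixing_order isopen g k.

From Stdlib Require Import Reals List Lra Lia IndefiniteDescription.
Open Scope R_scope.

(* Every Delta-open set around A in Psi contains a Hausdorff-type neighbourhood
   of a finite set F: all B in Psi lying within r of F and meeting every r-ball
   centred in F.  Hence, to make the images of the finitely many Delta-open sets
   U_i meet the V_i at a common time, it suffices to hit finitely many pairs of
   balls in X at a common time; the finite set of witnesses then lies in U_i and
   its image in V_i.  Conversely, the sets U^+ for U in the base, together with
   singletons, transfer weak mixing from Psi back to X. *)

Lemma finite_choice {T : Type} (t0 : T) (k : nat) (P : nat -> T -> Prop) :
  (forall i, (i < k)%nat -> exists t, P i t) ->
  exists h : nat -> T, forall i, (i < k)%nat -> P i (h i).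
Proof.
  intros H.
  assert (Htot : forall i, exists t, (i < k)%nat -> P i t).
  { intros i. destruct (Nat.lt_ge_cases i k) as [Hi | Hi].
    - destruct (H i Hi) as [t Ht]. exists t. auto.
    - exists t0. intros. lia. }
  exists (fun i => proj1_sig (constructive_indefinite_description _ (Htot i))).
  intros i Hi. exact (proj2_sig (constructive_indefinite_description _ (Htot i)) Hi).
Qed.

Lemma list_witnesses {A B : Type} (P : A -> B -> Prop) (L : list A) :
  (forall p, In p L -> exists x, P p x) ->
  exists xs, (forall p, In p L -> exists x, In x xs /\ P p x) /\
             (forall x, In x xs -> exists p, In p L /\ P p x).
Proof.
  induction L as [| p L IH]; intros H.
  - exists nil. split; intros _ [].
  - destruct (H p (or_introl eq_refl)) as [x0 Hx0].
    destruct IH as [xs [Hcov Hsrc]]; [intros q Hq; apply H; right; exact Hq |].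
    exists (x0 :: xs). split.
    + intros q [<- | Hq]; [exists x0; split; [left |]; auto |].
      destruct (Hcov q Hq) as [x [Hx HPx]]. exists x. split; [right |]; auto.
    + intros x [<- | Hx]; [exists p; split; [left |]; auto |].
      destruct (Hsrc x Hx) as [q [Hq HPq]]. exists q. split; [right |]; auto.
Qed.

Lemma list_common_radius {T : Type} (P : T -> R -> Prop) :
  (forall t r r', P t r -> 0 < r' <= r -> P t r') ->
  forall L, (forall t, In t L -> exists r, 0 < r /\ P t r) ->
  exists r, 0 < r /\ forall t, In t L -> P t r.
Proof.
  intros Hanti L. induction L as [| t L IH]; intros H.
  - exists 1. split; [lra | intros _ []].
  - destruct (H t (or_introl eq_refl)) as [r1 [Hr1 HP1]].
    destruct IH as [r2 [Hr2 HP2]]; [intros u Hu; apply H; right; exact Hu |].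
    assert (Hmin : 0 < Rmin r1 r2) by (apply Rmin_pos; assumption).
    exists (Rmin r1 r2). split; [exact Hmin |].
    intros u [<- | Hu].
    + apply Hanti with r1; [exact HP1 | split; [exact Hmin | apply Rmin_l]].
    + apply Hanti with r2; [apply HP2; exact Hu | split; [exact Hmin | apply Rmin_r]].
Qed.

Lemma weakly_mixing_all_list {T : Type} {isopen : (T -> Prop) -> Prop}
  {g : nat -> T -> T} :
  weakly_mixing_all isopen g ->
  forall L : list ((T -> Prop) * (T -> Prop)),
  (forall p, In p L -> isopen (fst p) /\ (exists x, fst p x) /\
                       isopen (snd p) /\ (exists y, snd p y)) ->
  exists n, (1 <= n)%nat /\ forall p, In p L -> exists x, fst p x /\ snd p (g n x).
Proof.
  intros Hwm [| p0 L'] HL; [exists 1%nat; split; [lia | intros _ []] |].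
  set (L := p0 :: L') in *.
  destruct (Hwm (length L)) with (U := fun i => fst (nth i L p0))
                                 (V := fun i => snd (nth i L p0)) as [n [Hn Hx]].
  - simpl. lia.
  - intros i Hi. apply HL, nth_In, Hi.
  - exists n. split; [exact Hn |]. intros p Hp.
    destruct (In_nth L p p0 Hp) as [i [Hi <-]]. apply Hx, Hi.
Qed.

Set Implicit Arguments.

Section Hyperspace.

Variables (X : Type) (d : X -> X -> R).
Variables (Psi : (X -> Prop) -> Prop) (Efam : (X -> Prop) -> Prop) (far : bool).

Hypothesis metric_d : is_metric d.
Hypothesis Psi_nonempty : forall A, Psi A -> exists x, A x.
Hypothesis Psi_finite : forall A, fin_nonempty A -> Psi A.
Hypothesis Efam_closed : forall E, Efam E -> closed d E.

Definition ball (a : X) (r : R) : X -> Prop := fun y => d a y < r.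

Lemma ball_open a r : open d (ball a r).
Proof.
  destruct metric_d as [_ [_ [_ Htri]]].
  intros x Hx. exists (r - d a x). split; [unfold ball in Hx; lra |].
  intros y Hy. unfold ball in *. specialize (Htri a x y). lra.
Qed.

Lemma ball_center a r : 0 < r -> ball a r a.
Proof.
  destruct metric_d as [_ [Hzero _]]. intros Hr. unfold ball.
  rewrite (proj2 (Hzero a a) eq_refl). exact Hr.
Qed.

Definition near_finite (F : list X) (r : R) (B : X -> Prop) : Prop :=
  (forall x, B x -> exists a, In a F /\ d a x < r) /\
  (forall a, In a F -> exists x, B x /\ d a x < r).

Definition nbhd_within (W : (X -> Prop) -> Prop) (F : list X) (r : R) : Prop :=
  forall B, Psi B -> near_finite F r B -> W B.

Definition finite_nbhd (W : (X -> Prop) -> Prop) (p : list X * R) : Prop :=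
  fst p <> nil /\ 0 < snd p /\ nbhd_within W (fst p) (snd p).

Lemma nbhd_within_antitone W F r r' : nbhd_within W F r -> r' <= r -> nbhd_within W F r'.
Proof.
  intros HW Hr' B HB [Hcov Hmeet]. apply HW; [exact HB | split].
  - intros x Bx. destruct (Hcov x Bx) as [a [Fa Hax]]. exists a. split; [exact Fa | lra].
  - intros a Fa. destruct (Hmeet a Fa) as [x [Bx Hax]]. exists x. split; [exact Bx | lra].
Qed.

Lemma fin_nonempty_list (xs : list X) : xs <> nil -> fin_nonempty (fun x => In x xs).
Proof. intros Hxs. exists xs. split; [exact Hxs | tauto]. Qed.

Lemma fin_nonempty_image (g : X -> X) (xs : list X) :
  xs <> nil -> fin_nonempty (image g (fun x => In x xs)).
Proof.
  intros Hxs. exists (map g xs). split.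
  - destruct xs; [contradiction | discriminate].
  - intros y. rewrite in_map_iff. unfold image. firstorder.
Qed.

Lemma Psi_singleton x : Psi (fun z => z = x).
Proof. apply Psi_finite. exists (x :: nil). split; [discriminate | simpl; intuition]. Qed.

(* A hit set needs the chosen point a0 to stay in F; a (far-)miss set needs F
   to stay inside A, so that the radius keeps the balls around F off E. *)
Lemma subbase_nbhd S A :
  adm_subbase d Psi Efam far S -> S A ->
  exists a0, A a0 /\ forall F, In a0 F -> (forall a, In a F -> A a) ->
    exists r, 0 < r /\ nbhd_within S F r.
Proof.
  intros [[U [HU HS]] | [E [HE HS]]] HSA.
  - destruct (proj1 (HS A) HSA) as [_ [a0 [Aa0 Ua0]]].
    destruct (HU a0 Ua0) as [r [Hr Hball]].
    exists a0. split; [exact Aa0 |]. intros F Fa0 _. exists r. split; [exact Hr |].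
    intros B HB [_ Hmeet]. apply HS. split; [exact HB |].
    destruct (Hmeet a0 Fa0) as [x [Bx Hx]]. exists x. split; [exact Bx | apply Hball, Hx].
  - destruct (proj1 (HS A) HSA) as [HPA Hmiss].
    destruct (Psi_nonempty HPA) as [a0 Aa0].
    exists a0. split; [exact Aa0 |]. intros F _ HFA.
    destruct far.
    + destruct Hmiss as [eps [Heps Hfar]].
      exists (eps / 2). split; [lra |].
      intros B HB [Hcov _]. apply HS. split; [exact HB |].
      exists (eps / 2). split; [lra |]. intros b y Bb Hby.
      destruct (Hcov b Bb) as [a [Fa Hab]].
      apply Hfar with a; [apply HFA, Fa |].
      destruct metric_d as [_ [_ [_ Htri]]]. specialize (Htri a b y). lra.
    + destruct (list_common_radius (fun a r => forall y, d a y < r -> ~ E y)) with (L := F)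
        as [r [Hr Hoff]].
      * intros a r r' Hoff Hr' y Hy. apply Hoff. lra.
      * intros a Fa. apply (Efam_closed HE). apply Hmiss, HFA, Fa.
      * exists r. split; [exact Hr |].
        intros B HB [Hcov _]. apply HS. split; [exact HB |].
        intros x Bx. destruct (Hcov x Bx) as [a [Fa Hax]]. exact (Hoff a Fa x Hax).
Qed.

Lemma Delta_open_finite_nbhd W A :
  Delta_open d Psi Efam far W -> W A -> exists p, finite_nbhd W p.
Proof.
  intros [HWPsi HW] WA.
  destruct (HW A WA) as [l [Hl Hsub]].
  destruct (list_witnesses (fun S a0 => A a0 /\ forall F, In a0 F ->
              (forall a, In a F -> A a) -> exists r, 0 < r /\ nbhd_within S F r) l)
    as [F0 [HF0 HF0A]].
  { intros S HS. destruct (Hl S HS) as [HSsub HSA]. exact (subbase_nbhd A HSsub HSA). }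
  destruct (Psi_nonempty (HWPsi A WA)) as [a Aa].
  set (F := a :: F0).
  assert (HFA : forall b, In b F -> A b).
  { intros b [<- | Hb]; [exact Aa |]. destruct (HF0A b Hb) as [S [_ [Ab _]]]. exact Ab. }
  destruct (list_common_radius (fun S r => nbhd_within S F r)) with (L := l) as [r [Hr HSr]].
  - intros S r r' HSr Hr'. apply nbhd_within_antitone with r; [exact HSr | lra].
  - intros S HS. destruct (HF0 S HS) as [a0 [Ha0 [_ Hrad]]].
    apply Hrad; [right; exact Ha0 | exact HFA].
  - exists (F, r). split; [discriminate | split; [exact Hr |]].
    intros B HB Hnear. apply Hsub; [exact HB |].
    intros S HS. exact (HSr S HS B HB Hnear).
Qed.

Lemma finite_set_near_images (g : X -> X) (r s : R) (F G : list X) :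
  F <> nil -> G <> nil ->
  (forall a c, In a F -> In c G -> exists x, d a x < r /\ d c (g x) < s) ->
  exists xs, xs <> nil /\ near_finite F r (fun x => In x xs) /\
             near_finite G s (image g (fun x => In x xs)).
Proof.
  intros HF HG Hpair.
  destruct (list_witnesses (fun ac x => d (fst ac) x < r /\ d (snd ac) (g x) < s)
              (list_prod F G)) as [xs [Hcov Hsrc]].
  { intros [a c] Hac. apply in_prod_iff in Hac. apply Hpair; tauto. }
  destruct F as [| a0 F']; [contradiction |]. destruct G as [| c0 G']; [contradiction |].
  exists xs. split; [| split; split].
  - destruct (Hcov (a0, c0)) as [x [Hx _]]; [apply in_prod; left; reflexivity |].
    intros E. rewrite E in Hx. exact Hx.
  - intros x Hx. destruct (Hsrc x Hx) as [[a c] [Hac [Hax _]]].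
    apply in_prod_iff in Hac. exists a. tauto.
  - intros a Ha. destruct (Hcov (a, c0)) as [x [Hx [Hax _]]];
      [apply in_prod; [exact Ha | left; reflexivity] |].
    exists x. tauto.
  - intros y [x [Hx ->]]. destruct (Hsrc x Hx) as [[a c] [Hac [_ Hcx]]].
    apply in_prod_iff in Hac. exists c. tauto.
  - intros c Hc. destruct (Hcov (a0, c)) as [x [Hx [_ Hcx]]];
      [apply in_prod; [left; reflexivity | exact Hc] |].
    exists (g x). split; [exists x; tauto | exact Hcx].
Qed.

Definition ball_pairs (F : list X) (r : R) (G : list X) (s : R) :
  list ((X -> Prop) * (X -> Prop)) :=
  map (fun ac => (ball (fst ac) r, ball (snd ac) s)) (list_prod F G).

Lemma weakly_mixing_all_hyperspace (g : nat -> X -> X) :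
  weakly_mixing_all (open d) g ->
  weakly_mixing_all (Delta_open d Psi Efam far) (fun n => image (g n)).
Proof.
  intros Hwm k _ U V HUV.
  destruct (finite_choice (nil, 0) k (fun i p => finite_nbhd (U i) p)) as [hU HhU].
  { intros i Hi. destruct (HUV i Hi) as [HU [[A UA] _]].
    exact (Delta_open_finite_nbhd A HU UA). }
  destruct (finite_choice (nil, 0) k (fun i p => finite_nbhd (V i) p)) as [hV HhV].
  { intros i Hi. destruct (HUV i Hi) as [_ [_ [HV [A VA]]]].
    exact (Delta_open_finite_nbhd A HV VA). }
  set (pairs i := ball_pairs (fst (hU i)) (snd (hU i)) (fst (hV i)) (snd (hV i))).
  destruct (weakly_mixing_all_list Hwm (flat_map pairs (seq 0 k))) as [n [Hn Hhit]].
  { intros p Hp. apply in_flat_map in Hp as [i [Hi Hp]]. apply in_seq in Hi.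
    apply in_map_iff in Hp as [[a c] [<- _]]. simpl.
    destruct (HhU i ltac:(lia)) as [_ [Hr _]]. destruct (HhV i ltac:(lia)) as [_ [Hs _]].
    repeat split; try apply ball_open.
    - exists a. apply ball_center, Hr.
    - exists c. apply ball_center, Hs. }
  exists n. split; [exact Hn |]. intros i Hi.
  destruct (HhU i Hi) as [HF [_ HUnbhd]]. destruct (HhV i Hi) as [HG [_ HVnbhd]].
  destruct (finite_set_near_images (g n) (r := snd (hU i)) (s := snd (hV i)) HF HG) as [xs [Hxs [HnearU HnearV]]].
  { intros a c Ha Hc.
    refine (Hhit (ball a (snd (hU i)), ball c (snd (hV i))) _).
    apply in_flat_map. exists i. split; [apply in_seq; lia |].
    apply in_map_iff. exists (a, c). split; [reflexivity | apply in_prod; assumption]. }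
  exists (fun x => In x xs). split.
  - apply HUnbhd; [apply Psi_finite, fin_nonempty_list, Hxs | exact HnearU].
  - apply HVnbhd; [apply Psi_finite, fin_nonempty_image, Hxs | exact HnearV].
Qed.

Lemma weakly_mixing_all_of_hyperspace (g : nat -> X -> X) (beta : (X -> Prop) -> Prop) :
  (forall O x, open d O -> O x -> exists U, beta U /\ U x /\ forall y, U y -> O y) ->
  (forall U, beta U -> Delta_open d Psi Efam far (fun A => Psi A /\ miss U A)) ->
  weakly_mixing_all (Delta_open d Psi Efam far) (fun n => image (g n)) ->
  weakly_mixing_all (open d) g.
Proof.
  intros Hbase Hplus Hwm k Hk U V HUV.
  destruct (finite_choice ((fun _ => True), (fun _ => True)) k
    (fun i p => beta (fst p) /\ beta (snd p) /\ (exists x, fst p x) /\ (exists y, snd p y) /\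
                (forall y, fst p y -> U i y) /\ (forall y, snd p y -> V i y))) as [h Hh].
  { intros i Hi. destruct (HUV i Hi) as [HU [[x Ux] [HV [y Vy]]]].
    destruct (Hbase _ _ HU Ux) as [B1 [? [? ?]]].
    destruct (Hbase _ _ HV Vy) as [B2 [? [? ?]]].
    exists (B1, B2). simpl. repeat split; eauto. }
  destruct (Hwm k Hk (fun i A => Psi A /\ miss (fst (h i)) A)
                     (fun i A => Psi A /\ miss (snd (h i)) A)) as [n [Hn Hhit]].
  { intros i Hi. destruct (Hh i Hi) as [HB1 [HB2 [[x Hx] [[y Hy] _]]]].
    repeat split; try apply Hplus; try assumption.
    - exists (fun z => z = x). split; [apply Psi_singleton | intros z ->; exact Hx].
    - exists (fun z => z = y). split; [apply Psi_singleton | intros z ->; exact Hy]. }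
  exists n. split; [exact Hn |]. intros i Hi.
  destruct (Hhit i Hi) as [A [[HA HAU] [_ HAV]]].
  destruct (Psi_nonempty HA) as [a Aa].
  destruct (Hh i Hi) as [_ [_ [_ [_ [HU HV]]]]].
  exists a. split; [apply HU, HAU, Aa |]. apply HV, HAV. exists a. split; [exact Aa | reflexivity].
Qed.

End Hyperspace.

Theorem mainTheorem5 (X : Type) (d : X -> X -> R) (f : nat -> X -> X)
  (Psi : (X -> Prop) -> Prop) (Efam : (X -> Prop) -> Prop) (far : bool) :
  is_metric d ->
  compact_space d ->
  (forall n, continuous d (f n)) ->
  (* Psi is a family of non-empty compact sets containing F(X) *)
  (forall A, Psi A -> (exists x, A x) /\ compact_set d A) ->
  (forall A, fin_nonempty A -> Psi A) ->
  (* Psi invariant under all omega_k *)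
  (forall k A, Psi A -> Psi (image (omega f k) A)) ->
  (* admissibility of Delta *)
  (forall E, Efam E -> closed d E) ->
  (forall W, Delta_open d Psi Efam far W -> open d (fun x => W (fun y => y = x))) ->
  (forall k W, Delta_open d Psi Efam far W ->
     Delta_open d Psi Efam far (fun A => Psi A /\ W (image (omega f k) A))) ->
  (* a base beta of X with U^+ in Delta for U in beta *)
  (exists beta : (X -> Prop) -> Prop,
     (forall U, beta U -> open d U) /\
     (forall O x, open d O -> O x -> exists U, beta U /\ U x /\ forall y, U y -> O y) /\
     (forall U, beta U -> Delta_open d Psi Efam far (fun A => Psi A /\ miss U A))) ->
  (weakly_mixing_all (open d) (omega f) <->
   weakly_mixing_all (Delta_open d Psi Efam far) (fun n => image (omega f n))).
Proof.
  intros Hm _ _ HPsi Hfin _ Hcl _ _ [beta [_ [Hbase Hplus]]].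
  assert (Hne : forall A, Psi A -> exists x, A x) by (intros A HA; apply HPsi, HA).
  split.
  - apply weakly_mixing_all_hyperspace; assumption.
  - apply weakly_mixing_all_of_hyperspace with beta; assumption.
Qed.
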